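(* Let $R$ be a Noetherian ring and $I$ an ideal of $R$. Consider the functor $\Gamma_I$ on finitely generated $R$-modules, $\Gamma_I(M)=\{m\in M: I^km=0\text{ for some }k\ge0\}$. The following are equivalent: (a) $\Gamma_I$ is representable; (b) $\Gamma_I$ is finitely generated; (c) $I^n=I^{n+1}$ for some $n\ge0$.
   Context: For an $R$-module $X$, $h_X=\operatorname{Hom}_R(X,-)$. An $R$-linear functor $F$ from finitely generated $R$-modules to themselves is representable if $F\cong h_M$ for some finitely generated $M$, and finitely generated if there is a finitely generated $M$ and a surjective natural transformation $h_M\to F$. *)

From HB Require Import structures.
From mathcomp Require Import all_boot all_order all_algebra.
Set Implicit Arguments. Unset Strict Implicit. Unset Printing Implicit Defensive.
Import GRing.Theory.
Local Open Scope ring_scope.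

Definition is_ideal (R : comPzRingType) (J : R -> Prop) : Prop :=
  J 0 /\ (forall x y, J x -> J y -> J (x + y)) /\ (forall r x, J x -> J (r * x)).

Definition fg_ideal (R : comPzRingType) (J : R -> Prop) : Prop :=
  exists (n : nat) (g : 'I_n -> R), (forall i, J (g i)) /\
    (forall x, J x -> exists c : 'I_n -> R, x = \sum_(i < n) c i * g i).

Definition noetherian (R : comPzRingType) : Prop :=
  forall J : R -> Prop, is_ideal J -> fg_ideal J.

Fixpoint ideal_pow (R : comPzRingType) (I : R -> Prop) (k : nat) : R -> Prop :=
  match k with
  | 0 => fun _ => True
  | k'.+1 => fun x => exists (n : nat) (a b : 'I_n -> R),
      (forall i, ideal_pow I k' (a i)) /\ (forall i, I (b i)) /\
      x = \sum_(i < n) a i * b i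
  end.

Definition fg_module (R : comPzRingType) (M : lmodType R) : Prop :=
  exists (n : nat) (v : 'I_n -> M),
    forall m : M, exists c : 'I_n -> R, m = \sum_(i < n) c i *: v i.

Definition Gamma (R : comPzRingType) (I : R -> Prop) (M : lmodType R) (m : M) : Prop :=
  exists k : nat, forall a : R, ideal_pow I k a -> a *: m = 0.

(* A natural transformation eta : h_X -> Gamma_I of functors on finitely
   generated R-modules: components eta_M : Hom_R(X, M) -> Gamma_I(M) (R-linear),
   natural in M. *)
Definition nat_trans_to_Gamma (R : comPzRingType) (I : R -> Prop) (X : lmodType R)
  (eta : forall M : lmodType R, {linear X -> M} -> M) : Prop :=
  (forall M : lmodType R, fg_module M -> forall f : {linear X -> M}, Gamma I (eta M f))
  /\ (forall M : lmodType R, fg_module M -> forall f g h : {linear X -> M},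
        (forall x, h x = f x + g x) -> eta M h = eta M f + eta M g)
  /\ (forall M : lmodType R, fg_module M -> forall (r : R) (f h : {linear X -> M}),
        (forall x, h x = r *: f x) -> eta M h = r *: eta M f)
  /\ (forall (M N : lmodType R), fg_module M -> fg_module N ->
        forall (f : {linear X -> M}) (g : {linear M -> N}) (gf : {linear X -> N}),
        (forall x, gf x = g (f x)) -> eta N gf = g (eta M f)).

Definition Gamma_representable (R : comPzRingType) (I : R -> Prop) : Prop :=
  exists (X : lmodType R) (eta : forall M : lmodType R, {linear X -> M} -> M),
    fg_module X /\ nat_trans_to_Gamma I eta /\
    (forall M : lmodType R, fg_module M ->
       (forall f g : {linear X -> M}, eta M f = eta M g -> forall x, f x = g x) /\
       (forall m : M, Gamma I m -> exists f : {linear X -> M}, eta M f = m)).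

Definition Gamma_fin_gen (R : comPzRingType) (I : R -> Prop) : Prop :=
  exists (X : lmodType R) (eta : forall M : lmodType R, {linear X -> M} -> M),
    fg_module X /\ nat_trans_to_Gamma I eta /\
    (forall M : lmodType R, fg_module M ->
       forall m : M, Gamma I m -> exists f : {linear X -> M}, eta M f = m).

From HB Require Import structures.
From mathcomp Require Import all_boot all_order all_algebra.
From mathcomp Require Import boolp.
Set Implicit Arguments. Unset Strict Implicit. Unset Printing Implicit Defensive.
Import GRing.Theory.
Local Open Scope ring_scope.

(* If I^n = I^(n+1), then Gamma_I(M) is the set of elements killed by I^n, and
   evaluation at the class of 1 identifies Hom(R/I^n, M) with it: Gamma_I is
   represented by R/I^n.  Conversely, let eta : h_X -> Gamma_I be surjective and
   let I^N kill eta_X(id).  The class of 1 in R/I^(N+1) lies in Gamma_I, so it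
   is eta(f) = f(eta_X(id)) for some f by naturality; hence I^N kills it, i.e.
   I^N is contained in I^(N+1). *)

Section IdealFacts.
Variables (R : comPzRingType) (J : R -> Prop).
Hypothesis hJ : is_ideal J.

Lemma ideal0 : J 0. Proof. by case: hJ. Qed.

Lemma idealD x y : J x -> J y -> J (x + y).
Proof. by case: hJ => _ [+ _]; apply. Qed.

Lemma idealMl r x : J x -> J (r * x).
Proof. by case: hJ => _ [_ +]; apply. Qed.

Lemma idealN x : J x -> J (- x).
Proof. by rewrite -mulN1r; apply: idealMl. Qed.

Lemma ideal_sum n (F : 'I_n -> R) : (forall i, J (F i)) -> J (\sum_(i < n) F i).
Proof. by move=> JF; elim/big_ind: _ => //; [apply: ideal0 | apply: idealD]. Qed.

End IdealFacts.

Section IdealPow.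
Variables (R : comPzRingType) (I : R -> Prop).
Hypothesis hI : is_ideal I.

Lemma ideal_pow_ideal k : is_ideal (ideal_pow I k).
Proof.
elim: k => [//|k IHk]; split; [|split].
- exists 0%N, (fun=> 0), (fun=> 0); split=> [[]//|]; split=> [_|].
    exact: ideal0.
  by rewrite big_ord0.
- move=> _ _ [n [a [b [Ia [Ib ->]]]]] [m [a' [b' [Ia' [Ib' ->]]]]].
  exists (n + m)%N, (fun i => match split i with inl j => a j | inr j => a' j end),
    (fun i => match split i with inl j => b j | inr j => b' j end).
  split; first by move=> i /=; case: (split i).
  split; first by move=> i /=; case: (split i).
  by rewrite big_split_ord; congr (_ + _); apply: eq_bigr => i _ /=;
    rewrite ?(unsplitK (inl _)) ?(unsplitK (inr _)).
- move=> r _ [n [a [b [Ia [Ib ->]]]]].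
  exists n, (fun i => r * a i), b.
  split; first by move=> i; apply: (idealMl IHk); apply: Ia.
  by split=> //; rewrite mulr_sumr; apply: eq_bigr => i _; rewrite mulrA.
Qed.

Lemma ideal_pow_succ_sub k x : ideal_pow I k.+1 x -> ideal_pow I k x.
Proof.
move=> [n [a [b [Ia [_ ->]]]]]; apply: (ideal_sum (ideal_pow_ideal k)) => i.
by rewrite mulrC; apply: (idealMl (ideal_pow_ideal k)); apply: Ia.
Qed.

Lemma ideal_pow_sub k l x : (k <= l)%N -> ideal_pow I l x -> ideal_pow I k x.
Proof.
move=> /subnKC <-; elim: (l - k)%N x => [|d IHd] x; first by rewrite addn0.
by rewrite addnS => /ideal_pow_succ_sub /IHd.
Qed.

Lemma ideal_pow_stable n :
    (forall x, ideal_pow I n x <-> ideal_pow I n.+1 x) ->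
  forall k x, (n <= k)%N -> ideal_pow I n x -> ideal_pow I k x.
Proof.
move=> stable_n k x /subnKC <-; elim: (k - n)%N x => [|d IHd] x In_x.
  by rewrite addn0.
rewrite addnS; have /= [m [a [b [Ia [Ib ->]]]]] := proj1 (stable_n x) In_x.
by exists m, a, b; split=> // i; apply: IHd.
Qed.

End IdealPow.

(* Elements of R/J are the cosets of J, viewed as predicates on R.  The carrier
   is indexed by a proof of [is_ideal J] so that the module structure can use it. *)
Record coset (R : comPzRingType) (J : R -> Prop) := Coset {
  coset_pred : R -> Prop;
  coset_predP : exists x, coset_pred = fun y => J (y - x) }.

Definition quot (R : comPzRingType) (J : R -> Prop) (hJ : is_ideal J) : Type :=
  coset J.

HB.instance Definition _ (R : comPzRingType) (J : R -> Prop) (hJ : is_ideal J) :=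
  gen_eqMixin (@quot R J hJ).
HB.instance Definition _ (R : comPzRingType) (J : R -> Prop) (hJ : is_ideal J) :=
  gen_choiceMixin (@quot R J hJ).

Section Quotient.
Variables (R : comPzRingType) (J : R -> Prop) (hJ : is_ideal J).
Local Notation Q := (quot hJ).

Definition pi (x : R) : Q := @Coset R J (fun y => J (y - x)) (ex_intro _ x erefl).
Definition repr (q : Q) : R := projT1 (cid (coset_predP q)).

Lemma coset_eq (q1 q2 : Q) : coset_pred q1 = coset_pred q2 -> q1 = q2.
Proof.
case: q1 q2 => [p1 e1] [p2 e2] /= p12; subst p2.
by rewrite (Prop_irrelevance e1 e2).
Qed.

Lemma reprK q : pi (repr q) = q.
Proof. by apply: coset_eq; rewrite /repr; case: cid => x /= ->. Qed.

Lemma quot_ind (P : Q -> Prop) : (forall x, P (pi x)) -> forall q, P q.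
Proof. by move=> Ppi q; rewrite -(reprK q). Qed.

Lemma eqpiP x y : pi x = pi y <-> J (x - y).
Proof.
split.
  move=> /(congr1 (@coset_pred _ _)) /(congr1 (fun P => P x)) /= <-.
  by rewrite subrr; apply: ideal0.
move=> Jxy; apply: coset_eq; apply: funext => z; apply: propext => /=.
have -> : z - x = (z - y) - (x - y) by rewrite opprB addrA subrK.
split=> [Jzx|Jzy]; last by apply: (idealD hJ) => //; apply: idealN.
have -> : z - y = (z - y) - (x - y) + (x - y) by rewrite subrK.
exact: (idealD hJ).
Qed.

Lemma reprP x : J (repr (pi x) - x).
Proof. by apply/eqpiP; rewrite reprK. Qed.

Definition quot_add (q1 q2 : Q) : Q := pi (repr q1 + repr q2).
Definition quot_opp (q : Q) : Q := pi (- repr q).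
Definition quot_scale (r : R) (q : Q) : Q := pi (r * repr q).

Lemma quot_addE x y : quot_add (pi x) (pi y) = pi (x + y).
Proof.
apply/eqpiP; rewrite opprD addrACA.
by apply: (idealD hJ); apply: reprP.
Qed.

Lemma quot_oppE x : quot_opp (pi x) = pi (- x).
Proof. by apply/eqpiP; rewrite -opprD; apply: (idealN hJ); apply: reprP. Qed.

Lemma quot_scaleE r x : quot_scale r (pi x) = pi (r * x).
Proof. by apply/eqpiP; rewrite -mulrBr; apply: (idealMl hJ); apply: reprP. Qed.

Lemma quot_addA : associative quot_add.
Proof. by do 3!elim/quot_ind=> ?; rewrite !quot_addE addrA. Qed.

Lemma quot_addC : commutative quot_add.
Proof. by do 2!elim/quot_ind=> ?; rewrite !quot_addE addrC. Qed.

Lemma quot_add0 : left_id (pi 0) quot_add.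
Proof. by elim/quot_ind=> ?; rewrite quot_addE add0r. Qed.

Lemma quot_addN : left_inverse (pi 0) quot_opp quot_add.
Proof. by elim/quot_ind=> ?; rewrite quot_oppE quot_addE addNr. Qed.

HB.instance Definition _ :=
  GRing.isZmodule.Build Q quot_addA quot_addC quot_add0 quot_addN.

Lemma piD x y : pi (x + y) = pi x + pi y.
Proof. by rewrite -quot_addE. Qed.

Lemma quot_scaleA a b q : quot_scale a (quot_scale b q) = quot_scale (a * b) q.
Proof. by elim/quot_ind: q => ?; rewrite !quot_scaleE mulrA. Qed.

Lemma quot_scale1 : left_id 1 quot_scale.
Proof. by elim/quot_ind=> ?; rewrite quot_scaleE mul1r. Qed.

Lemma quot_scaleDr : right_distributive quot_scale +%R.
Proof.
by move=> r; do 2!elim/quot_ind=> ?; rewrite -piD !quot_scaleE -piD mulrDr.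
Qed.

Lemma quot_scaleDl q : {morph quot_scale^~ q : a b / a + b}.
Proof. by elim/quot_ind: q => x a b; rewrite !quot_scaleE -piD mulrDl. Qed.

HB.instance Definition _ := GRing.Zmodule_isLmodule.Build R Q
  quot_scaleA quot_scale1 quot_scaleDr quot_scaleDl.

Lemma piZ r x : r *: pi x = pi (r * x).
Proof. exact: quot_scaleE. Qed.

Lemma pi_eq0 x : pi x = 0 <-> J x.
Proof. by rewrite -[0 : Q]/(pi 0) eqpiP subr0. Qed.

Lemma pi1_ann a : J a -> a *: pi 1 = 0.
Proof. by rewrite piZ mulr1 => /pi_eq0. Qed.

Lemma quot_fg : fg_module Q.
Proof.
exists 1%N, (fun=> pi 1); elim/quot_ind=> x.
by exists (fun=> x); rewrite big_ord1 piZ mulr1.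
Qed.

Lemma quot_linear_eq (M : lmodType R) (f g : {linear Q -> M}) :
  f (pi 1) = g (pi 1) -> forall q, f q = g q.
Proof. by move=> fg1; elim/quot_ind=> x; rewrite -[x]mulr1 -piZ !linearZ /= fg1. Qed.

Section Lift.
Variables (M : lmodType R) (m : M).
Hypothesis Jm : forall a, J a -> a *: m = 0.

Definition quot_lift of (forall a, J a -> a *: m = 0) := fun q : Q => repr q *: m.

Lemma quot_liftE x : quot_lift Jm (pi x) = x *: m.
Proof. by apply/eqP; rewrite -subr_eq0 -scalerBl Jm //; apply: reprP. Qed.

Lemma quot_lift_linear : linear (quot_lift Jm).
Proof.
move=> a; do 2!elim/quot_ind=> ?.
by rewrite piZ -piD !quot_liftE scalerDl scalerA.
Qed.

End Lift.
End Quotient.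

HB.instance Definition _ (R : comPzRingType) (J : R -> Prop) (hJ : is_ideal J)
    (M : lmodType R) (m : M) (Jm : forall a, J a -> a *: m = 0) :=
  GRing.isLinear.Build R (quot hJ) M *:%R (quot_lift Jm) (quot_lift_linear Jm).

Section Corollary.
Variables (R : comPzRingType) (I : R -> Prop).
Hypothesis hI : is_ideal I.

Lemma Gamma_ann_stable_pow n (M : lmodType R) (m : M) :
    (forall x, ideal_pow I n x <-> ideal_pow I n.+1 x) ->
  Gamma I m -> forall a, ideal_pow I n a -> a *: m = 0.
Proof.
move=> stable_n [k Ik_m] a In_a; apply: Ik_m.
have [le_kn | lt_nk] := leqP k n; first exact: ideal_pow_sub In_a.
exact: ideal_pow_stable (ltnW lt_nk) In_a.
Qed.

Lemma eval_pi1_nat_trans n :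
  nat_trans_to_Gamma I (fun M (f : {linear quot (ideal_pow_ideal hI n) -> M}) =>
                          f (pi _ 1)).
Proof.
split.
  move=> M _ f; exists n => a In_a.
  by rewrite -linearZ /= pi1_ann ?linear0.
split; first by move=> M _ f g h ->.
split; first by move=> M _ r f h ->.
by move=> M N _ _ f g gf ->.
Qed.

Lemma representable_of_stable n :
  (forall x, ideal_pow I n x <-> ideal_pow I n.+1 x) -> Gamma_representable I.
Proof.
move=> stable_n; pose hJ := ideal_pow_ideal hI n.
exists (quot hJ), (fun M f => f (pi hJ 1)).
split; first exact: quot_fg.
split; first exact: eval_pi1_nat_trans.
move=> M _; split; first exact: quot_linear_eq.
move=> m Gm; have Jm := Gamma_ann_stable_pow stable_n Gm.
by exists (quot_lift Jm); rewrite /= quot_liftE scale1r.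
Qed.

Lemma fin_gen_of_representable : Gamma_representable I -> Gamma_fin_gen I.
Proof.
move=> [X [eta [fgX [eta_nat eta_iso]]]]; exists X, eta.
by do 2!split=> //; move=> M fgM; case: (eta_iso M fgM).
Qed.

Lemma stable_of_fin_gen : Gamma_fin_gen I ->
  exists n, forall x, ideal_pow I n x <-> ideal_pow I n.+1 x.
Proof.
move=> [X [eta [fgX [[eta_Gamma [_ [_ eta_natural]]] eta_onto]]]].
have [N IN_eta_id] := eta_Gamma X fgX idfun.
pose hJ := ideal_pow_ideal hI N.+1.
have Gamma_pi1 : Gamma I (pi hJ 1) by exists N.+1; apply: pi1_ann.
have [f eta_f] := eta_onto _ (quot_fg hJ) _ Gamma_pi1.
have eta_fE := eta_natural X (quot hJ) fgX (quot_fg hJ) idfun f f (fun=> erefl).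
exists N => x; split; last exact: ideal_pow_succ_sub.
move=> IN_x; apply/(pi_eq0 hJ).
by rewrite -[x]mulr1 -piZ -eta_f eta_fE -linearZ /= IN_eta_id // linear0.
Qed.

End Corollary.

Theorem corollary3p3 (R : comPzRingType) (I : R -> Prop) :
  noetherian R -> is_ideal I ->
  (Gamma_representable I <-> Gamma_fin_gen I) /\
  (Gamma_fin_gen I <->
     exists n : nat, forall x : R, ideal_pow I n x <-> ideal_pow I n.+1 x).
Proof.
move=> _ hI.
have c_to_a : (exists n, forall x, ideal_pow I n x <-> ideal_pow I n.+1 x) ->
    Gamma_representable I.
  by move=> [n]; apply: representable_of_stable.
split; split.
- exact: fin_gen_of_representable.
- by move=> /(stable_of_fin_gen hI) /c_to_a.
- exact: stable_of_fin_gen.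
- by move=> /c_to_a /fin_gen_of_representable.
Qed.
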